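(* Let $(g,f)$ be a Riordan matrix with $g(t)=\sum_{j\ge0}g_jt^j$, $g_0=1$, possessing a type-II $B$-sequence, and let $Z(t)=\sum_{n\ge0}z_nt^n$ be the generating function of its $Z$-sequence. Then $Z'(0)=z_1=0$, or equivalently, $g_1^2=g_0g_2$.
   Context: Let $K$ be $\mathbb{R}$ or $\mathbb{C}$. A (proper) Riordan matrix is a pair $(g,f)$ of formal power series in $K[[t]]$ with $g(0)=1$, $f(0)=0$, $f'(0)\neq 0$, identified with the infinite lower triangular matrix $(d_{n,k})_{n,k\ge0}$, $d_{n,k}=[t^n]g(t)f(t)^k$; we set $d_{n,k}=0$ if $n<0$, $k<0$ or $k>n$. The $Z$-sequence of $(g,f)$ is the unique sequence whose generating function $Z(t)$ satisfies $g(t)=1/(1-tZ(f(t)))$. A type-II $B$-sequence is a sequence $(\hat b_j)_{j\ge0}$ such that $d_{n+1,0}=\sum_{j\ge0}\hat b_j d_{n-j,j}$ for all $n\ge0$. *)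

From mathcomp Require Import all_boot all_order all_algebra.
Set Implicit Arguments. Unset Strict Implicit. Unset Printing Implicit Defensive.
Import GRing.Theory Num.Theory.
Local Open Scope ring_scope.

Definition fps (K : numFieldType) := nat -> K.

Section FPS.
Variable K : numFieldType.

Definition fps_one : fps K := fun n => if n == 0%N then 1 else 0.

Definition fps_mul (a b : fps K) : fps K :=
  fun n => \sum_(i < n.+1) a i * b (n - i)%N.

Fixpoint fps_pow (a : fps K) (k : nat) : fps K :=
  if k is k'.+1 then fps_mul a (fps_pow a k') else fps_one.

Definition fps_shift (a : fps K) : fps K :=
  fun n => if n is n'.+1 then a n' else 0.

(* composition a(f(t)) for f(0) = 0: [t^n] a(f) = sum_{k<=n} a_k [t^n] f^k *)
Definition fps_comp (a f : fps K) : fps K :=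
  fun n => \sum_(k < n.+1) a k * fps_pow f k n.

Definition proper_riordan (g f : fps K) : Prop :=
  g 0%N = 1 /\ f 0%N = 0 /\ f 1%N != 0.

Definition riordan_entry (g f : fps K) (n k : nat) : K :=
  fps_mul g (fps_pow f k) n.

(* Z is the (generating function of the) Z-sequence: g = 1/(1 - t Z(f)),
   i.e. g * (1 - t Z(f)) = 1 *)
Definition is_Z_sequence (g f Z : fps K) : Prop :=
  fps_mul g (fun n => fps_one n - fps_shift (fps_comp Z f) n) = fps_one.

(* type-II B-sequence: d_{n+1,0} = sum_{j>=0} b_j d_{n-j,j};
   terms with j > n vanish since d_{m,k} = 0 for m < 0 *)
Definition is_typeII_B_sequence (g f b : fps K) : Prop :=
  forall n : nat, riordan_entry g f n.+1 0 =
    \sum_(j < n.+1) b j * riordan_entry g f (n - j)%N j.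

End FPS.

(* The first two rows of a type-II B-sequence relation read g_1 = b_0 g_0 and
   g_2 = b_0 g_1 + b_1 d_{0,1}, and d_{0,1} = 0, so g_1^2 = g_0 g_2 for any
   B-sequence.  On the other hand, comparing coefficients of t and t^2 in
   g = 1 + t g Z(f) gives g_0 g_2 - g_1^2 = g_0^2 z_1 f_1.  Since f_1 <> 0,
   z_1 = 0. *)

From mathcomp Require Import all_boot all_order all_algebra.
From mathcomp Require Import zify ring.
Import GRing.Theory Num.Theory.
Local Open Scope ring_scope.

Section RiordanLowCoefficients.
Local Set Implicit Arguments.
Variable K : numFieldType.
Implicit Types (a b c f g Z : fps K).

Lemma fps_mul0 a b : fps_mul a b 0 = a 0%N * b 0%N.
Proof. by rewrite /fps_mul big_ord1. Qed.

Lemma fps_mul1 a b : fps_mul a b 1 = a 0%N * b 1%N + a 1%N * b 0%N.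
Proof. by rewrite /fps_mul big_ord_recr big_ord1. Qed.

Lemma fps_mulr1 a n : fps_mul a (fps_one K) n = a n.
Proof.
rewrite /fps_mul big_ord_recr /= subnn /fps_one eqxx mulr1 big1 ?add0r //.
by move=> [i /= lt_in] _; rewrite subn_eq0 leqNgt lt_in mulr0.
Qed.

Lemma fps_mulrBr a b c n :
  fps_mul a (fun m => b m - c m) n = fps_mul a b n - fps_mul a c n.
Proof. by rewrite /fps_mul -sumrB; apply: eq_bigr => i _; rewrite mulrBr. Qed.

Lemma fps_mul_shiftr a b n : fps_mul a (fps_shift b) n.+1 = fps_mul a b n.
Proof.
rewrite /fps_mul big_ord_recr /= subnn mulr0 addr0.
by apply: eq_bigr => [[i /= lt_in]] _; rewrite subSn.
Qed.

Lemma fps_pow_lt f k n : f 0%N = 0 -> (n < k)%N -> fps_pow f k n = 0.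
Proof.
move=> f0; elim: k n => [//|k IHk] n lt_nk /=.
rewrite /fps_mul big1 // => [[[|i] /= lt_in]] _; first by rewrite f0 mul0r.
by rewrite IHk ?mulr0 //; lia.
Qed.

Lemma fps_comp0 a f : fps_comp a f 0 = a 0%N.
Proof. by rewrite /fps_comp big_ord1 /= /fps_one /= mulr1. Qed.

Lemma fps_comp1 a f : f 0%N = 0 -> fps_comp a f 1 = a 1%N * f 1%N.
Proof.
move=> f0; rewrite /fps_comp big_ord_recr big_ord1 /= fps_mulr1.
by rewrite /fps_one /= mulr0 add0r.
Qed.

Lemma riordan_entry_n0 g f n : riordan_entry g f n 0 = g n.
Proof. exact: fps_mulr1. Qed.

Lemma riordan_entry_lt g f n k :
  f 0%N = 0 -> (n < k)%N -> riordan_entry g f n k = 0.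
Proof.
move=> f0 lt_nk; rewrite /riordan_entry /fps_mul big1 // => i _.
by rewrite fps_pow_lt ?mulr0 //; lia.
Qed.

Lemma typeII_B_sequence_sqr g f b :
  f 0%N = 0 -> is_typeII_B_sequence g f b -> g 1%N ^+ 2 = g 0%N * g 2%N.
Proof.
move=> f0 hB.
have g1E : g 1%N = b 0%N * g 0%N.
  by have := hB 0%N; rewrite riordan_entry_n0 big_ord1 riordan_entry_n0.
have g2E : g 2%N = b 0%N * g 1%N.
  have := hB 1%N; rewrite riordan_entry_n0 big_ord_recr big_ord1 /=.
  by rewrite riordan_entry_n0 riordan_entry_lt // mulr0 addr0.
by rewrite g2E expr2 {1}g1E; ring.
Qed.

Lemma Z_sequence_coef g f Z :
  is_Z_sequence g f Z -> forall n, g n.+1 = fps_mul g (fps_comp Z f) n.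
Proof.
move=> hZ n; have := congr1 (fun s => s n.+1) hZ.
by rewrite fps_mulrBr fps_mulr1 fps_mul_shiftr /fps_one /= => /subr0_eq.
Qed.

Lemma Z_sequence_defect g f Z :
  f 0%N = 0 -> is_Z_sequence g f Z ->
  g 0%N * g 2%N - g 1%N ^+ 2 = g 0%N ^+ 2 * (Z 1%N * f 1%N).
Proof.
move=> f0 hZ.
have g1E : g 1%N = g 0%N * Z 0%N by rewrite (Z_sequence_coef hZ 0) fps_mul0 fps_comp0.
have g2E : g 2%N = g 0%N * (Z 1%N * f 1%N) + g 1%N * Z 0%N.
  by rewrite (Z_sequence_coef hZ 1) fps_mul1 fps_comp0 fps_comp1.
by rewrite g2E expr2 {3}g1E; ring.
Qed.

End RiordanLowCoefficients.

Theorem proposition3p3 (K : numFieldType) (g f Z : fps K) :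
  proper_riordan g f ->
  (exists b : fps K, is_typeII_B_sequence g f b) ->
  is_Z_sequence g f Z ->
  Z 1%N = 0 /\ g 1%N ^+ 2 = g 0%N * g 2%N.
Proof.
move=> [g0 [f0 f1]] [b hB] hZ.
have g1_sqr := typeII_B_sequence_sqr f0 hB.
split=> //.
have := Z_sequence_defect f0 hZ.
rewrite -g1_sqr subrr g0 expr1n mul1r => /esym/eqP.
by rewrite mulf_eq0 (negbTE f1) orbF => /eqP.
Qed.
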